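(* In the setting described in the context, let $M^s\subseteq M_{k+n}$ and $w^{m,s}_{k+n}=\sum_{r\in M^s}w^r_{k+n}$. Then $$w^{m,s}_{k+n}\;\le\;\eta_{k+n}\;\le\;w^{m,s}_{k+n}+\Big(\frac{|M_{k+n}|}{|M_k|}-\sum_{r\in M^s}w_k^{r}\Big)\prod_{i=1}^{n}\sigma^i,$$ where $w_k^r$ denotes the prior weight $w_k^{a(r)}$ of the time-$k$ ancestor $a(r)$ of $r$, with repeated ancestors counted with multiplicity.
   Context: Setting (data-association-aware planning over a horizon $n\ge1$ from time $k$). The belief at time $k$ is a mixture over a finite nonempty set $M_k$ of hypotheses, with weights $w_k^j\ge0$ satisfying $\sum_{j\in M_k}w_k^j=1$. Let $D$ be a finite set of data-association realizations. At each look-ahead step $i=1,\dots,n$, every hypothesis $j$ at step $i-1$ spawns exactly $|D|$ child hypotheses $(j,\beta)$, one for each $\beta\in D$. Hence the set $M_{k+n}$ of hypotheses at step $n$ has $|M_{k+n}|=|M_k||D|^n$ elements, and each $r\in M_{k+n}$ has a unique ancestor $a(r)\in M_k$. Fix a sequence of future actions and future observations $Z_{k+1},\dots,Z_{k+n}$ (one path of the belief tree). The unnormalized hypothesis weights are defined recursively by the Bayesian weight update $$w_{k+i}^{(j,\beta)}=w_{k+i-1}^{j}\int \mathbb{P}(Z_{k+i}\mid x_{k+i},\beta)\,\mathbb{P}(\beta\mid x_{k+i})\,b^{j}_{k+i}(x_{k+i})\,dx_{k+i}.$$ Here $b^j_{k+i}$ is the probability density of the state $x_{k+i}$ under hypothesis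 $j$, propagated by the motion model; $\mathbb{P}(\beta\mid x_{k+i})\in[0,1]$; and $\mathbb{P}(Z_{k+i}\mid x_{k+i},\beta)$ is the measurement likelihood. Let $\sigma^i=\max\mathbb{P}(Z_{k+i}\mid x_{k+i})$ denote the maximum of the measurement likelihood of $Z_{k+i}$ over states (and associations), assumed finite. Finally, $\eta_{k+n}=\sum_{r\in M_{k+n}}w_{k+n}^r$. *)

From HB Require Import structures.
From mathcomp Require Import all_boot all_order all_algebra.
From mathcomp Require Import all_classical all_reals all_analysis.
Set Implicit Arguments. Unset Strict Implicit. Unset Printing Implicit Defensive.
Import Order.TTheory GRing.Theory Num.Theory.
Local Open Scope ring_scope.
Local Open Scope ereal_scope.

(* Hypotheses at look-ahead step i are pairs (a, s) with a : Mk the time-k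
   ancestor and s : i.-tuple D the associations realized so far, the most
   recent one at the HEAD of s.  The child (j, beta) of j = (a, s) is
   (a, beta :: s).

   Parameters (for the fixed path of actions/observations):
   - w0 j        : prior weight w_k^j
   - L i beta x  : measurement likelihood P(Z_{k+i} | x_{k+i} = x, beta)
   - Pb i beta x : P(beta | x_{k+i} = x)
   - b i a s x   : density b^{(a,s)}_{k+i}(x) of x_{k+i} under the parent
                   hypothesis (a,s) at step i-1 (s : (i-1)-tuple), w.r.t. mu. *)
Fixpoint hyp_weight {d} {T : measurableType d} {R : realType}
  {Mk D : finType} (mu : {measure set T -> \bar R}) (w0 : Mk -> R)
  (L : nat -> D -> T -> R) (Pb : nat -> D -> T -> R)
  (b : forall i : nat, Mk -> (i.-1).-tuple D -> T -> R)
  (i : nat) : Mk -> i.-tuple D -> \bar R :=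
  match i return Mk -> i.-tuple D -> \bar R with
  | 0 => fun a _ => (w0 a)%:E
  | i'.+1 => fun a t =>
      hyp_weight mu w0 L Pb b a (behead_tuple t) *
      \int[mu]_x (L i'.+1 (thead t) x * Pb i'.+1 (thead t) x
                   * b i'.+1 a (behead_tuple t) x)%:E
  end.

Definition is_max_of {R : realType} {A B : Type} (f : A -> B -> R) (s : R) :=
  (forall a x, (f a x <= s)%R) /\ exists a x, f a x = s.

From HB Require Import structures.
From mathcomp Require Import all_boot all_order all_algebra.
From mathcomp Require Import all_classical all_reals all_analysis.
From mathcomp Require Import measurable_realfun.
Import Order.TTheory GRing.Theory Num.Theory.
Local Open Scope ring_scope.

(* Each look-ahead step multiplies a weight by the integral of the likelihood
   (bounded by sigma^i) times an association probability (in [0, 1]) against a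
   probability density, a factor in [0, sigma^i].  Hence every leaf weight is at
   most its root prior times prod_i sigma^i.  Since every root has exactly
   |D|^n = |M_{k+n}| / |M_k| leaves, the root priors of the leaves outside M^s
   sum to |D|^n minus those of the leaves in M^s. *)

Lemma is_max_of_ge0 {R : realType} {A B : Type} {f : A -> B -> R} {s : R} :
  (forall a x, 0 <= f a x) -> is_max_of f s -> 0 <= s.
Proof. by move=> f_ge0 [_ [a [x <-]]]. Qed.

Section DensityIntegral.
Context d (T : measurableType d) (R : realType) (mu : {measure set T -> \bar R}).
Variables (l p f : T -> R) (s : R).
Hypotheses (ml : measurable_fun setT l) (mp : measurable_fun setT p)
  (mf : measurable_fun setT f).
Hypotheses (l_ge0 : forall x, 0 <= l x) (l_le : forall x, l x <= s)
  (p01 : forall x, 0 <= p x <= 1) (f_ge0 : forall x, 0 <= f x).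

Let lpf_ge0 x : 0 <= l x * p x * f x.
Proof. by case/andP: (p01 x) => p_ge0 _; rewrite !mulr_ge0. Qed.

Lemma integral_weighted_density_ge0 :
  (0 <= \int[mu]_x (l x * p x * f x)%:E)%E.
Proof. by apply: integral_ge0 => x _; rewrite lee_fin. Qed.

Lemma integral_weighted_density_le :
  0 <= s -> (\int[mu]_x (f x)%:E = 1)%E ->
  (\int[mu]_x (l x * p x * f x)%:E <= s%:E)%E.
Proof.
move=> s_ge0 f1.
have mEf : measurable_fun setT (fun x => (f x)%:E : \bar R) by apply/measurable_EFinP.
apply: (@le_trans _ _ (\int[mu]_x (s%:E * (f x)%:E))%E).
  apply: ge0_le_integral => //.
  - by move=> x _; rewrite lee_fin.
  - apply/measurable_EFinP.
    by do 2![apply: measurable_funM => //].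
  - by apply: measurable_funeM.
  move=> x _; rewrite -EFinM lee_fin ler_wpM2r //.
  case/andP: (p01 x) => p_ge0 p_le1.
  by rewrite (le_trans _ (l_le x)) // ler_piMr.
by rewrite ge0_integralZl ?f1 ?mule1 // => x _; rewrite lee_fin.
Qed.

End DensityIntegral.

Section WeightBound.
Context {d} {T : measurableType d} {R : realType} {mu : {measure set T -> \bar R}}.
Context {Mk D : finType} {n : nat} {w0 : Mk -> R} {L Pb : nat -> D -> T -> R}.
Context {b : forall i : nat, Mk -> (i.-1).-tuple D -> T -> R} {sigma : nat -> R}.
Hypothesis w0_ge0 : forall j, 0 <= w0 j.
Hypothesis L_ge0 : forall i, (1 <= i <= n)%N -> forall beta x, 0 <= L i beta x.
Hypothesis mL : forall i, (1 <= i <= n)%N -> forall beta, measurable_fun setT (L i beta).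
Hypothesis Pb01 : forall i, (1 <= i <= n)%N -> forall beta x, 0 <= Pb i beta x <= 1.
Hypothesis mPb : forall i, (1 <= i <= n)%N -> forall beta, measurable_fun setT (Pb i beta).
Hypothesis b_ge0 : forall i, (1 <= i <= n)%N -> forall a s x, 0 <= b i a s x.
Hypothesis mb : forall i, (1 <= i <= n)%N -> forall a s, measurable_fun setT (b i a s).
Hypothesis b1 : forall i, (1 <= i <= n)%N -> forall a s, (\int[mu]_x (b i a s x)%:E = 1)%E.
Hypothesis L_max : forall i, (1 <= i <= n)%N -> is_max_of (L i) (sigma i).

Local Notation hw := (hyp_weight mu w0 L Pb b).

Lemma sigma_ge0 i : (1 <= i <= n)%N -> 0 <= sigma i.
Proof. move=> i_n; exact: is_max_of_ge0 (L_ge0 _ i_n) (L_max _ i_n). Qed.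

Lemma assoc_integral_ge0 i beta a s : (1 <= i <= n)%N ->
  (0 <= \int[mu]_x (L i beta x * Pb i beta x * b i a s x)%:E)%E.
Proof.
move=> i_n; apply: integral_weighted_density_ge0 => x; first exact: L_ge0.
- exact: Pb01.
- exact: b_ge0.
Qed.

Lemma assoc_integral_le_sigma i beta a s : (1 <= i <= n)%N ->
  (\int[mu]_x (L i beta x * Pb i beta x * b i a s x)%:E <= (sigma i)%:E)%E.
Proof.
move=> i_n; have [L_le _] := L_max _ i_n.
by apply: integral_weighted_density_le; rewrite ?sigma_ge0 ?b1; eauto.
Qed.

Lemma hyp_weight_ge0 i a (t : i.-tuple D) : (i <= n)%N -> (0 <= hw a t)%E.
Proof.
elim: i a t => [|i IH] a t i_n /=; first by rewrite lee_fin.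
by rewrite mule_ge0 ?IH ?assoc_integral_ge0 ?i_n ?(ltnW i_n).
Qed.

Lemma hyp_weight_le_prior i a (t : i.-tuple D) : (i <= n)%N ->
  (hw a t <= (w0 a * \prod_(1 <= j < i.+1) sigma j)%:E)%E.
Proof.
elim: i a t => [|i IH] a t i_n /=; first by rewrite big_geq // mulr1.
rewrite big_nat_recr //= mulrA EFinM.
by rewrite lee_pmul ?IH ?hyp_weight_ge0 ?assoc_integral_ge0 ?assoc_integral_le_sigma ?i_n ?(ltnW i_n).
Qed.

End WeightBound.

Lemma sum_fst_prod (R : nmodType) (I J : finType) (f : I -> R) :
  \sum_(r : I * J) f r.1 = (\sum_i f i) *+ #|J|.
Proof.
rewrite -(pair_big xpredT xpredT (fun i (_ : J) => f i)) /=.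
by under eq_bigr do rewrite sumr_const; rewrite sumrMnl.
Qed.

Lemma sum_fst_notin (R : numFieldType) (I J : finType) (f : I -> R)
    (A : {set I * J}) :
  (0 < #|I|)%N -> \sum_i f i = 1 ->
  \sum_(r | r \notin A) f r.1 = #|{: I * J}|%:R / #|I|%:R - \sum_(r in A) f r.1.
Proof.
move=> I_gt0 f1.
have -> : #|{: I * J}|%:R / #|I|%:R = #|J|%:R :> R.
  by rewrite card_prod natrM mulrC mulKf // pnatr_eq0 -lt0n.
have -> : #|J|%:R = \sum_(r : I * J) f r.1 by rewrite sum_fst_prod f1.
by rewrite [in RHS](bigID (mem A)) /= addrAC subrr add0r; apply: eq_bigl.
Qed.

Theorem theorem3 (d : measure_display) (T : measurableType d) (R : realType)
  (mu : {measure set T -> \bar R}) (Mk D : finType) (n : nat)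
  (w0 : Mk -> R) (L : nat -> D -> T -> R) (Pb : nat -> D -> T -> R)
  (b : forall i : nat, Mk -> (i.-1).-tuple D -> T -> R) (sigma : nat -> R)
  (Ms : {set Mk * n.-tuple D}) :
  (1 <= n)%N ->
  (0 < #|Mk|)%N ->
  (forall j, 0 <= w0 j) ->
  \sum_(j : Mk) w0 j = 1 ->
  (forall i, (1 <= i <= n)%N -> forall beta x, 0 <= L i beta x) ->
  (forall i, (1 <= i <= n)%N -> forall beta, measurable_fun setT (L i beta)) ->
  (forall i, (1 <= i <= n)%N -> forall beta x, 0 <= Pb i beta x <= 1) ->
  (forall i, (1 <= i <= n)%N -> forall beta, measurable_fun setT (Pb i beta)) ->
  (forall i, (1 <= i <= n)%N -> forall a s x, 0 <= b i a s x) ->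
  (forall i, (1 <= i <= n)%N -> forall a s, measurable_fun setT (b i a s)) ->
  (forall i, (1 <= i <= n)%N -> forall a s,
      (\int[mu]_x (b i a s x)%:E = 1)%E) ->
  (forall i, (1 <= i <= n)%N -> is_max_of (L i) (sigma i)) ->
  let w := fun r : Mk * n.-tuple D => hyp_weight mu w0 L Pb b r.1 r.2 in
  let eta := (\sum_(r : Mk * n.-tuple D) w r)%E in
  let wms := (\sum_(r in Ms) w r)%E in
  (wms <= eta)%E /\
  (eta <= wms + ((#|{: Mk * n.-tuple D}|%:R / #|Mk|%:R
                   - \sum_(r in Ms) w0 r.1)
                  * \prod_(1 <= i < n.+1) sigma i)%:E)%E.
Proof.
move=> _ Mk_gt0 w0_ge0 w0_sum1 L_ge0 mL Pb01 mPb b_ge0 mb b1 L_max w eta wms.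
have w_ge0 r : (0 <= w r)%E.
  by apply: (hyp_weight_ge0 w0_ge0 L_ge0 Pb01 b_ge0 n r.1 r.2).
have w_le r : (w r <= (w0 r.1 * \prod_(1 <= i < n.+1) sigma i)%:E)%E.
  by apply: (hyp_weight_le_prior w0_ge0 L_ge0 mL Pb01 mPb b_ge0 mb b1 L_max n r.1 r.2).
have etaE : eta = (wms + \sum_(r | r \notin Ms) w r)%E by rewrite /eta (bigID (mem Ms)).
rewrite etaE; split; first by rewrite leeDl // sume_ge0.
rewrite leeD2l // -sum_fst_notin // mulr_suml -sumEFin.
exact: lee_sum.
Qed.
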